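(* Let $k\in\{1,2,4\}$, let $\mu:X\times Y\to Z$ be an isometric bilinear map of Euclidean spaces with $0<\dim X\le\dim Y=\dim Z=k$, let $\mathbb A$ be the normed division algebra of dimension $k$ ($\mathbb R$, $\mathbb C$ or $\mathbb H$), and let $W\subset\mathbb A$ be a real subspace with $\dim W=\dim X$. (a) There exist linear isometries $\varphi_X:X\to W$, $\varphi_Y:Y\to\mathbb A$, $\varphi_Z:Z\to\mathbb A$ with $\varphi_Z(\mu(x,y))=\varphi_X(x)\varphi_Y(y)$ for all $x\in X,y\in Y$. (b) If moreover $1\in W$, then for any unit vectors $e_X\in X$, $e_Y\in Y$ such isometries can be chosen with additionally $\varphi_X(e_X)=1$ and $\varphi_Y(e_Y)=1$.
   Context: A bilinear map $\mu:X\times Y\to Z$ of finite-dimensional real Euclidean spaces is isometric if $|\mu(x,y)|=|x|\,|y|$ for all $x,y$. $\mathbb R,\mathbb C,\mathbb H$ carry their standard Euclidean norms and multiplications. *)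

(* Euclidean spaces of dimension n are modelled as row
   vectors 'rV[R]_n with the standard inner product; linear maps as matrices
   acting on the right (x |-> x *m P). *)
From HB Require Import structures.
From mathcomp Require Import all_boot all_order all_algebra.
Set Implicit Arguments. Unset Strict Implicit. Unset Printing Implicit Defensive.
Import Order.TTheory GRing.Theory Num.Theory.
Local Open Scope ring_scope.

Definition vnorm (R : rcfType) (n : nat) (u : 'rV[R]_n) : R :=
  Num.sqrt (\sum_(i < n) u 0 i ^+ 2).

Definition bilinear_map (R : rcfType) (m n p : nat)
  (mu : 'rV[R]_m -> 'rV[R]_n -> 'rV[R]_p) : Prop :=
  (forall (a : R) x x' y, mu (a *: x + x') y = a *: mu x y + mu x' y) /\
  (forall (a : R) x y y', mu x (a *: y + y') = a *: mu x y + mu x y').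

Definition isometric_bilinear (R : rcfType) (m n p : nat)
  (mu : 'rV[R]_m -> 'rV[R]_n -> 'rV[R]_p) : Prop :=
  bilinear_map mu /\ forall x y, vnorm (mu x y) = vnorm x * vnorm y.

Definition lin_isometry (R : rcfType) (m n : nat) (P : 'M[R]_(m, n)) : Prop :=
  forall x : 'rV[R]_m, vnorm (x *m P) = vnorm x.

(* Quaternion multiplication table on the basis e0 = 1, e1 = i, e2 = j, e3 = k:
   qprod j l = (index, negative sign?) with e_j e_l = +- e_index. *)
Definition qprod (j l : nat) : nat * bool :=
  match j, l with
  | 0, l => (l, false)
  | j, 0 => (j, false)
  | 1, 1 | 2, 2 | 3, 3 => (0, true)
  | 1, 2 => (3, false) | 2, 1 => (3, true)
  | 2, 3 => (1, false) | 3, 2 => (1, true)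
  | 3, 1 => (2, false) | 1, 3 => (2, true)
  | _, _ => (0, false)
  end.

Definition qcoef (R : rcfType) (i j l : nat) : R :=
  let: (n, s) := qprod j l in
  if n == i then (if s then -1 else 1) else 0.

(* The normed division algebra A of dimension k in {1,2,4}, realised on R^k:
   the span of e0..e_(k-1) inside H, i.e. R (k=1), C = R + Ri (k=2), H (k=4),
   with their standard multiplication; the norm is vnorm. *)
Definition amul (R : rcfType) (k : nat) (a b : 'rV[R]_k) : 'rV[R]_k :=
  \row_(i < k) \sum_(j < k) \sum_(l < k) qcoef R i j l * a 0 j * b 0 l.

Definition aone (R : rcfType) (k : nat) : 'rV[R]_k :=
  \row_(i < k) (if (i : nat) == 0%N then 1 else 0).

(* Fix a unit vector e of X and write mu_x for the matrix of y |-> mu(x, y).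
   Polarising |mu(x, y)| = |x| |y| shows that the maps J_x = mu_x mu_e^-1, for x
   orthogonal to e, are skew, square to -1, and anticommute when the x's are
   orthogonal: an orthonormal basis (e, f_1, ..., f_(m-1)) of X turns R^k into a
   Clifford module.  Choose orthonormal purely imaginary w_i in W.  For k = 4 the
   bases (y, y J_1, y J_2, y J_2 J_1) and (1, w_1, w_2, w_1 w_2) are orthonormal
   and J_i and left multiplication by w_i have the same matrices in them, so the
   isometry phi_Y between them intertwines J_i with w_i; then phi_X(f_i) = w_i and
   phi_Z = phi_Y mu_e^-1 do the job.  For m = 4 the third structure J_3 is forced
   to be +-J_2 J_1, matching w_3 = +-w_1 w_2.  If 1 is not in W, left
   multiplication by a unit of W reduces to a subspace containing 1. *)

From HB Require Import structures.
From mathcomp Require Import all_boot all_order all_algebra.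
From mathcomp Require Import ring lra zify.
Import Order.TTheory GRing.Theory Num.Theory.
Local Open Scope ring_scope.

Set Implicit Arguments.
Unset Strict Implicit.
Unset Printing Implicit Defensive.

Section EuclideanRows.
Variable R : rcfType.

Definition vdot n (u v : 'rV[R]_n) : R := (u *m v^T) 0 0.

Lemma vdotE n (u v : 'rV[R]_n) : vdot u v = \sum_i u 0 i * v 0 i.
Proof. by rewrite /vdot mxE; apply: eq_bigr => i _; rewrite mxE. Qed.

Lemma vdotC n (u v : 'rV[R]_n) : vdot u v = vdot v u.
Proof. by rewrite !vdotE; apply: eq_bigr => i _; rewrite mulrC. Qed.

Lemma vdotDl n (u v w : 'rV[R]_n) : vdot (u + v) w = vdot u w + vdot v w.
Proof. by rewrite /vdot mulmxDl mxE. Qed.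

Lemma vdotDr n (u v w : 'rV[R]_n) : vdot w (u + v) = vdot w u + vdot w v.
Proof. by rewrite vdotC vdotDl !(vdotC w). Qed.

Lemma vdotZl n a (u w : 'rV[R]_n) : vdot (a *: u) w = a * vdot u w.
Proof. by rewrite /vdot -scalemxAl mxE. Qed.

Lemma vdotZr n a (u w : 'rV[R]_n) : vdot w (a *: u) = a * vdot w u.
Proof. by rewrite vdotC vdotZl vdotC. Qed.

Lemma vdotNl n (u w : 'rV[R]_n) : vdot (- u) w = - vdot u w.
Proof. by rewrite -scaleN1r vdotZl mulN1r. Qed.

Lemma vdotNr n (u w : 'rV[R]_n) : vdot w (- u) = - vdot w u.
Proof. by rewrite vdotC vdotNl vdotC. Qed.

Lemma vdot_ge0 n (u : 'rV[R]_n) : 0 <= vdot u u.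
Proof. by rewrite vdotE sumr_ge0 // => i _; rewrite -expr2 sqr_ge0. Qed.

Lemma vdot_eq0 n (u : 'rV[R]_n) : vdot u u = 0 -> u = 0.
Proof.
rewrite vdotE => /eqP; rewrite psumr_eq0 => [/allP u0|i _]; last by rewrite -expr2 sqr_ge0.
apply/rowP => i; rewrite mxE.
by have := u0 i (mem_index_enum i); rewrite /= -expr2 sqrf_eq0 => /eqP.
Qed.

Lemma vnormE n (u : 'rV[R]_n) : vnorm u = Num.sqrt (vdot u u).
Proof. by rewrite /vnorm vdotE; congr Num.sqrt; apply: eq_bigr => i _; rewrite expr2. Qed.

Lemma vdot_of_vnorm n (u : 'rV[R]_n) : vnorm u = 1 -> vdot u u = 1.
Proof. by rewrite vnormE => u1; rewrite -(sqr_sqrtr (vdot_ge0 u)) u1 expr1n. Qed.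

Lemma vdot_mulmxl m n (v : 'rV[R]_m) (P : 'M[R]_(m, n)) (w : 'rV[R]_n) :
  vdot (v *m P) w = vdot v (w *m P^T).
Proof. by rewrite /vdot trmx_mul trmxK mulmxA. Qed.

Lemma mulmx_trE p q n (A : 'M[R]_(p, n)) (B : 'M[R]_(q, n)) i j :
  (A *m B^T) i j = vdot (row i A) (row j B).
Proof. by rewrite /vdot !mxE; apply: eq_bigr => l _; rewrite !mxE. Qed.

Lemma vdot_delta n (i j : 'I_n) : vdot (delta_mx 0 i) (delta_mx 0 j) = (i == j)%:R :> R.
Proof. by rewrite /vdot trmx_delta mul_delta_mx_cond; case: (i == j); rewrite !mxE. Qed.

Lemma orthonormalP p n (V : 'M[R]_(p, n)) :
  V *m V^T = 1%:M <-> forall i j, vdot (row i V) (row j V) = (i == j)%:R.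
Proof.
split=> [VV i j | Vrows]; first by rewrite -mulmx_trE VV mxE.
by apply/matrixP => i j; rewrite mulmx_trE Vrows mxE.
Qed.

Lemma orthonormal_lin_isometry m n (P : 'M[R]_(m, n)) :
  P *m P^T = 1%:M -> lin_isometry P.
Proof. by move=> PP x; rewrite !vnormE vdot_mulmxl -mulmxA PP mulmx1. Qed.

Lemma orthonormal_row n (u : 'rV[R]_n) : vdot u u = 1 -> u *m u^T = 1%:M.
Proof. by move=> u1; apply/matrixP => i j; rewrite !ord1 -[LHS]/(vdot u u) u1 mxE. Qed.

Lemma orthogonal_rows p n (V : 'M[R]_(p, n)) (u : 'rV[R]_n) :
  u *m V^T = 0 -> forall i, vdot u (row i V) = 0.
Proof.
move=> uV i; have := congr1 (fun M : 'rV[R]_p => M 0 i) uV.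
by rewrite mulmx_trE mxE => <-; congr vdot; apply/rowP => j; rewrite mxE.
Qed.

Lemma rank_orthonormal p n (V : 'M[R]_(p, n)) : V *m V^T = 1%:M -> \rank V = p.
Proof.
move=> VV; apply/eqP; rewrite eqn_leq rank_leq_row /=.
by have := mxrankM_maxl V V^T; rewrite VV mxrank1.
Qed.

Lemma orthonormal_col_mx a b n (A : 'M[R]_(a, n)) (B : 'M[R]_(b, n)) :
  A *m A^T = 1%:M -> B *m B^T = 1%:M -> B *m A^T = 0 ->
  col_mx A B *m (col_mx A B)^T = 1%:M.
Proof.
move=> AA BB BA; rewrite tr_col_mx mul_col_mx !mul_mx_row AA BB BA.
by rewrite -[A *m B^T]trmxK trmx_mul trmxK BA trmx0 -block_mxEv -scalar_mx_block.
Qed.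

Lemma exists_unit_orth p q n (S : 'M[R]_(p, n)) (V : 'M[R]_(q, n)) :
  (\rank V < \rank S)%N ->
  exists u : 'rV[R]_n, [/\ (u <= S)%MS, u *m V^T = 0 & vdot u u = 1].
Proof.
move=> ltVS.
have dimSK := mxrank_sum_cap S (kermx V^T).
rewrite mxrank_ker mxrank_tr in dimSK.
have := rank_leq_col (S + kermx V^T)%MS; have := rank_leq_col V => leV leSK.
have : (\rank (S :&: kermx V^T)%MS != 0)%N by lia.
rewrite mxrank_eq0 => /rowV0Pn [v vSK v_neq0].
have vV : v *m V^T = 0 by apply/sub_kermxP; apply: submx_trans vSK (capmxSr _ _).
have v_gt0 : 0 < vdot v v.
  by rewrite lt_def vdot_ge0 andbT; apply: contraNneq v_neq0 => /vdot_eq0 ->.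
set s := Num.sqrt (vdot v v); have s_gt0 : 0 < s by rewrite sqrtr_gt0.
exists (s^-1 *: v); split.
- by rewrite scalemx_sub // (submx_trans vSK) ?capmxSl.
- by rewrite -scalemxAl vV scaler0.
- rewrite vdotZl vdotZr mulrA -(@sqr_sqrtr _ (vdot v v)) ?ltW // -/s.
  by field; rewrite gt_eqF.
Qed.

Lemma orthonormal_complete s p n (S : 'M[R]_n) (V : 'M[R]_(p, n)) :
  V *m V^T = 1%:M -> (p + s <= \rank S)%N ->
  exists G : 'M[R]_(s, n), [/\ G *m G^T = 1%:M, G *m V^T = 0 & (G <= S)%MS].
Proof.
move=> VV; elim: s => [|s IH] leS.
  by exists 0; split; [apply/matrixP => i [] | apply/matrixP => [[]] | rewrite sub0mx].
have [G [GG GV GS]] := IH ltac:(lia).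
have VG : col_mx V G *m (col_mx V G)^T = 1%:M by apply: orthonormal_col_mx.
have [u [uS] ] := @exists_unit_orth _ _ _ S (col_mx V G) ltac:(rewrite rank_orthonormal //; lia).
rewrite tr_col_mx mul_mx_row => /eqP; rewrite -row_mx0 => /eqP/eq_row_mx [uV uG] u1.
have Gu : G *m u^T = 0 by rewrite -[G *m _]trmxK trmx_mul trmxK uG trmx0.
exists (col_mx u G); split.
- exact: orthonormal_col_mx (orthonormal_row u1) GG Gu.
- by have := mul_col_mx u G V^T; rewrite uV GV col_mx0.
- by have := col_mx_sub u G S; rewrite uS GS.
Qed.

Lemma orthonormal_basis_row0 n (e : 'rV[R]_n.+1) : vdot e e = 1 ->
  exists F : 'M[R]_n.+1, F *m F^T = 1%:M /\ row 0 F = e.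
Proof.
move=> e1; have [G [GG Ge _]] := @orthonormal_complete n 1 n.+1 1%:M e (orthonormal_row e1)
  ltac:(by rewrite mxrank1).
exists (col_mx e G); split; first exact: orthonormal_col_mx (orthonormal_row e1) GG Ge.
have -> : (0 : 'I_n.+1) = lshift n (0 : 'I_1) by apply/val_inj.
by apply/rowP => j; rewrite mxE; have := col_mxEu e G 0 j.
Qed.

Lemma orthonormal_expand n (B : 'M[R]_n) (v : 'rV[R]_n) :
  B *m B^T = 1%:M -> v = \sum_i vdot v (row i B) *: row i B.
Proof.
move=> BB; rewrite -{1}[v]mulmx1 -(mulmx1C BB) mulmxA mulmx_sum_row.
apply: eq_bigr => i _; congr (_ *: _).
by rewrite /vdot !mxE; apply: eq_bigr => l _; rewrite !mxE.
Qed.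

Definition mxrows p n (s : seq 'rV[R]_n) : 'M[R]_(p, n) := \matrix_(i < p) nth 0 s i.

Lemma row_mxrows p n (s : seq 'rV[R]_n) i : row i (mxrows p s) = nth 0 s i.
Proof. by apply/rowP => j; rewrite !mxE. Qed.

Lemma orthonormal_mxrows2 n (a b : 'rV[R]_n) :
  vdot a a = 1 -> vdot b b = 1 -> vdot a b = 0 ->
  mxrows 2 [:: a; b] *m (mxrows 2 [:: a; b])^T = 1%:M.
Proof.
move=> *; apply/orthonormalP => i j; rewrite !row_mxrows.
by case: i => [[|[|i]] hi] //; case: j => [[|[|j]] hj] //=; rewrite vdotC.
Qed.

Lemma orthonormal_mxrows3 n (a b c : 'rV[R]_n) :
  vdot a a = 1 -> vdot b b = 1 -> vdot c c = 1 ->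
  vdot a b = 0 -> vdot a c = 0 -> vdot b c = 0 ->
  mxrows 3 [:: a; b; c] *m (mxrows 3 [:: a; b; c])^T = 1%:M.
Proof.
move=> *; apply/orthonormalP => i j; rewrite !row_mxrows.
by case: i => [[|[|[|i]]] hi] //; case: j => [[|[|[|j]]] hj] //=; rewrite vdotC.
Qed.

Lemma orthonormal_mxrows4 n (a b c d : 'rV[R]_n) :
  vdot a a = 1 -> vdot b b = 1 -> vdot c c = 1 -> vdot d d = 1 ->
  vdot a b = 0 -> vdot a c = 0 -> vdot a d = 0 ->
  vdot b c = 0 -> vdot b d = 0 -> vdot c d = 0 ->
  mxrows 4 [:: a; b; c; d] *m (mxrows 4 [:: a; b; c; d])^T = 1%:M.
Proof.
move=> *; apply/orthonormalP => i j; rewrite !row_mxrows.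
by case: i => [[|[|[|[|i]]]] hi] //; case: j => [[|[|[|[|j]]]] hj] //=; rewrite vdotC.
Qed.

Lemma exists_unit_orth1 p n (S : 'M[R]_(p, n)) (a : 'rV[R]_n) :
  vdot a a = 1 -> (1 < \rank S)%N ->
  exists u : 'rV[R]_n, [/\ (u <= S)%MS, vdot u a = 0 & vdot u u = 1].
Proof.
move=> a1 S1; have [|u [uS ua u1]] := @exists_unit_orth _ _ _ S a.
  by rewrite (rank_orthonormal (orthonormal_row a1)).
exists u; split => //; have := orthogonal_rows ua 0.
by rewrite (_ : row 0 a = a) //; apply/rowP => j; rewrite mxE.
Qed.

Lemma exists_unit_orth2 p n (S : 'M[R]_(p, n)) (a b : 'rV[R]_n) :
  vdot a a = 1 -> vdot b b = 1 -> vdot a b = 0 -> (2 < \rank S)%N ->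
  exists u : 'rV[R]_n, [/\ (u <= S)%MS, vdot u a = 0, vdot u b = 0 & vdot u u = 1].
Proof.
move=> a1 b1 ab S2; have [|u [uS uab u1]] := @exists_unit_orth _ _ _ S (mxrows 2 [:: a; b]).
  by rewrite (rank_orthonormal (orthonormal_mxrows2 a1 b1 ab)).
exists u; split => //.
- by have := orthogonal_rows uab 0; rewrite row_mxrows.
- by have := orthogonal_rows uab 1; rewrite row_mxrows.
Qed.

Lemma orthonormal_mulTmx n (B C : 'M[R]_n) : B *m B^T = 1%:M -> C *m C^T = 1%:M ->
  (B^T *m C) *m (B^T *m C)^T = 1%:M.
Proof. by move=> BB CC; rewrite trmx_mul trmxK mulmxA -(mulmxA _ C) CC mulmx1 mulmx1C. Qed.

Lemma row_mulTmx n (B C : 'M[R]_n) i : B *m B^T = 1%:M -> row i B *m (B^T *m C) = row i C.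
Proof. by move=> BB; rewrite mulmxA -row_mul BB row1 -rowE. Qed.

End EuclideanRows.

Section IsometricBilinear.
Variables (R : rcfType) (m n p : nat) (mu : 'rV[R]_m -> 'rV[R]_n -> 'rV[R]_p).
Hypothesis mu_iso : isometric_bilinear mu.

Lemma mu_linl a x x' y : mu (a *: x + x') y = a *: mu x y + mu x' y.
Proof. by case: mu_iso => [[]]. Qed.

Lemma mu_linr a x y y' : mu x (a *: y + y') = a *: mu x y + mu x y'.
Proof. by case: mu_iso => [[]]. Qed.

Lemma mu_addl x x' y : mu (x + x') y = mu x y + mu x' y.
Proof. by have := mu_linl 1 x x' y; rewrite !scale1r. Qed.

Lemma mu_addr x y y' : mu x (y + y') = mu x y + mu x y'.
Proof. by have := mu_linr 1 x y y'; rewrite !scale1r. Qed.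

Lemma mu0l y : mu 0 y = 0.
Proof. by apply: (addrI (mu 0 y)); rewrite -mu_addl !addr0. Qed.

Lemma mu0r x : mu x 0 = 0.
Proof. by apply: (addrI (mu x 0)); rewrite -mu_addr !addr0. Qed.

Lemma muZr a x y : mu x (a *: y) = a *: mu x y.
Proof. by rewrite -[a *: y]addr0 mu_linr mu0r addr0. Qed.

Definition mumx x : 'M[R]_(n, p) := \matrix_(i, j) mu x (delta_mx 0 i) 0 j.

Lemma row_mumx x i : row i (mumx x) = mu x (delta_mx 0 i).
Proof. by apply/rowP => j; rewrite !mxE. Qed.

Lemma mu_mumx x y : mu x y = y *m mumx x.
Proof.
rewrite {1}(row_sum_delta y) mulmx_sum_row.
elim/big_rec2: _ => [|i a b _ IH]; first by rewrite mu0r.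
by rewrite mu_addr muZr row_mumx IH.
Qed.

Lemma mumx_sum (I : finType) (c : I -> R) (v : I -> 'rV[R]_m) :
  mumx (\sum_i c i *: v i) = \sum_i c i *: mumx (v i).
Proof.
elim/big_rec2: _ => [|l a b _ <-]; first by apply/matrixP => i j; rewrite !mxE mu0l mxE.
by apply/matrixP => i j; rewrite !mxE mu_linl !mxE.
Qed.

Lemma vdot_mu x y : vdot (mu x y) (mu x y) = vdot x x * vdot y y.
Proof.
case: mu_iso => _ /(_ x y); rewrite !vnormE => /(congr1 (fun t => t ^+ 2)).
by rewrite /= exprMn !sqr_sqrtr // vdot_ge0.
Qed.

Lemma vdot_mur x y y' : vdot (mu x y) (mu x y') = vdot x x * vdot y y'.
Proof.
have := vdot_mu x (y + y').
rewrite mu_addr !vdotDl !vdotDr !vdot_mu (vdotC (mu x y')) (vdotC y') !mulrDr.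
lra.
Qed.

Lemma vdot_mu_polar x x' y y' :
  vdot (mu x y) (mu x' y') + vdot (mu x' y) (mu x y') = 2 * vdot x x' * vdot y y'.
Proof.
have := vdot_mur (x + x') y y'.
rewrite !mu_addl !vdotDl !vdotDr !vdot_mur (vdotC x') !mulrDl.
lra.
Qed.

Lemma mumx_orth x : mumx x *m (mumx x)^T = (vdot x x)%:M.
Proof.
apply/matrixP => i j; rewrite mulmx_trE !row_mumx vdot_mur !mxE vdot_delta.
by case: (i == j); rewrite ?mulr1 ?mulr0.
Qed.

Lemma mumx_polar x x' :
  mumx x *m (mumx x')^T + mumx x' *m (mumx x)^T = (2 * vdot x x')%:M.
Proof.
apply/matrixP => i j; rewrite mxE !mulmx_trE !row_mumx vdot_mu_polar !mxE vdot_delta.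
by case: (i == j); rewrite ?mulr1 ?mulr0.
Qed.

End IsometricBilinear.

Definition cplx_struct (R : rcfType) n (J : 'M[R]_n) : Prop := J^T = - J /\ J *m J = - 1%:M.

Section ComplexStructures.
Variables (R : rcfType) (n : nat).
Implicit Types (J : 'M[R]_n) (v w : 'rV[R]_n).

Lemma vdotJ J v w : cplx_struct J -> vdot (v *m J) (w *m J) = vdot v w.
Proof. by case=> JT JJ; rewrite vdot_mulmxl -mulmxA JT mulmxN JJ opprK mulmx1. Qed.

Lemma vdotJl J v w : cplx_struct J -> vdot (v *m J) w = - vdot v (w *m J).
Proof. by case=> JT _; rewrite vdot_mulmxl JT mulmxN vdotNr. Qed.

Lemma vdotJ_id J v : cplx_struct J -> vdot (v *m J) v = 0.
Proof. by move=> cJ; have := vdotJl v v cJ; rewrite (vdotC v); lra. Qed.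

Lemma vdotJJ J1 J2 v : cplx_struct J1 -> cplx_struct J2 ->
  J1 *m J2 = - (J2 *m J1) -> vdot (v *m J1) (v *m J2) = 0.
Proof.
move=> cJ1 cJ2 J12; have := vdotJl (v *m J2) v cJ1; have := vdotJl (v *m J1) v cJ2.
rewrite -!mulmxA J12 mulmxN mulmxA vdotNl (vdotC (v *m J2)); lra.
Qed.

Lemma intertwine_conj J L S (B C : 'M[R]_n) :
  B *m B^T = 1%:M -> C *m C^T = 1%:M -> B *m J = S *m B -> C *m L = S *m C ->
  J *m (B^T *m C) = (B^T *m C) *m L.
Proof.
move=> BB CC BJ CL.
have -> : J = B^T *m S *m B by rewrite -[J]mul1mx -(mulmx1C BB) -[_ *m B *m J]mulmxA BJ mulmxA.
have -> : L = C^T *m S *m C by rewrite -[L]mul1mx -(mulmx1C CC) -[_ *m C *m L]mulmxA CL mulmxA.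
by rewrite !mulmxA -(mulmxA _ B) BB mulmx1 -(mulmxA B^T C) CC mulmx1.
Qed.

End ComplexStructures.

Section CliffordModule.
Variables (R : rcfType) (m n : nat) (mu : 'rV[R]_m -> 'rV[R]_n -> 'rV[R]_n).
Hypothesis mu_iso : isometric_bilinear mu.
Variable e : 'rV[R]_m.
Hypothesis e1 : vdot e e = 1.

Definition Jmu x : 'M[R]_n := mumx mu x *m (mumx mu e)^T.

Lemma mumx_unit_orth : mumx mu e *m (mumx mu e)^T = 1%:M.
Proof. by rewrite mumx_orth // e1. Qed.

Lemma Jmu_unit : Jmu e = 1%:M.
Proof. exact: mumx_unit_orth. Qed.

Lemma Jmu_mulTmx x x' : Jmu x *m (Jmu x')^T = mumx mu x *m (mumx mu x')^T.
Proof.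
by rewrite /Jmu trmx_mul trmxK mulmxA -(mulmxA _ _ (mumx mu e)) (mulmx1C mumx_unit_orth) mulmx1.
Qed.

Lemma tr_Jmu x : vdot x e = 0 -> (Jmu x)^T = - Jmu x.
Proof.
move=> xe; apply/eqP; rewrite -addr_eq0 /Jmu trmx_mul trmxK addrC mumx_polar //.
by rewrite xe mulr0 raddf0.
Qed.

Lemma cplx_struct_Jmu x : vdot x e = 0 -> vdot x x = 1 -> cplx_struct (Jmu x).
Proof.
move=> xe x1; split; first exact: tr_Jmu.
have := Jmu_mulTmx x x; rewrite tr_Jmu // mulmxN mumx_orth // x1 => JJ.
by rewrite -[Jmu x *m Jmu x]opprK JJ.
Qed.

Lemma Jmu_anticomm x x' : vdot x e = 0 -> vdot x' e = 0 -> vdot x x' = 0 ->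
  Jmu x *m Jmu x' = - (Jmu x' *m Jmu x).
Proof.
move=> xe x'e xx'; have := mumx_polar mu_iso x x'.
rewrite -!Jmu_mulTmx !tr_Jmu // !mulmxN xx' mulr0 raddf0 => /eqP.
by rewrite -opprD oppr_eq0 addr_eq0 => /eqP.
Qed.

Lemma cplx_struct_Jmu_row (F : 'M[R]_m) i0 i :
  F *m F^T = 1%:M -> row i0 F = e -> i != i0 -> cplx_struct (Jmu (row i F)).
Proof.
move=> /orthonormalP FF F0 /negPf ii0.
by apply: cplx_struct_Jmu; rewrite -?F0 FF ?ii0 ?eqxx.
Qed.

Lemma Jmu_row_anticomm (F : 'M[R]_m) i0 i j :
  F *m F^T = 1%:M -> row i0 F = e -> i != i0 -> j != i0 -> i != j ->
  Jmu (row i F) *m Jmu (row j F) = - (Jmu (row j F) *m Jmu (row i F)).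
Proof.
move=> /orthonormalP FF F0 /negPf ii0 /negPf ji0 /negPf ij.
by apply: Jmu_anticomm; rewrite -?F0 FF ?ii0 ?ji0 ?ij.
Qed.

End CliffordModule.

Section MulModels.
Variable R : rcfType.

Definition lmul k (a : 'rV[R]_k) : 'M[R]_k :=
  \matrix_(l < k, i < k) \sum_(j < k) qcoef R i j l * a 0 j.

Lemma amul_lmul k (a b : 'rV[R]_k) : amul a b = b *m lmul a.
Proof.
apply/rowP => i; rewrite !mxE exchange_big /=; apply: eq_bigr => l _.
by rewrite !mxE mulr_sumr; apply: eq_bigr => j _; ring.
Qed.

Lemma lmulZ k c (a : 'rV[R]_k) : lmul (c *: a) = c *: lmul a.
Proof.
by apply/matrixP => l i; rewrite !mxE mulr_sumr; apply: eq_bigr => j _; rewrite !mxE; ring.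
Qed.

Lemma lmul_sum k (I : finType) (c : I -> R) (v : I -> 'rV[R]_k) :
  lmul (\sum_i c i *: v i) = \sum_i c i *: lmul (v i).
Proof.
elim/big_rec2: _ => [|i a b _ <-].
  by apply/matrixP => l j; rewrite !mxE big1 // => j' _; rewrite mxE mulr0.
apply/matrixP => l j; rewrite !mxE mulr_sumr -big_split /=; apply: eq_bigr => j' _.
by rewrite !mxE; ring.
Qed.

Lemma aone_delta n : aone R n.+1 = delta_mx 0 0.
Proof. by apply/rowP => j; rewrite !mxE eqxx /=; case: j => [[|j] hj]. Qed.

Lemma vdot_aone n : vdot (aone R n.+1) (aone R n.+1) = 1.
Proof. by rewrite aone_delta vdot_delta eqxx. Qed.

Lemma lmul_one k : lmul (aone R k.+1) = 1%:M.
Proof.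
apply/matrixP => l i; rewrite !mxE (bigD1 ord0) //= big1 => [|j j0]; last first.
  by rewrite mxE; case: j j0 => [[|j] hj] //= _; rewrite mulr0.
rewrite mxE /= mulr1 addr0 /qcoef /=.
by rewrite -[(l : nat) == i]/(l == i); case: (l == i).
Qed.

Definition aconj k (a : 'rV[R]_k) : 'rV[R]_k := (2 * vdot a (aone R k)) *: aone R k - a.

Definition normed_assoc_algebra k : Prop :=
  [/\ forall a b c : 'rV[R]_k, amul a (amul b c) = amul (amul a b) c,
      forall a b : 'rV[R]_k, vdot (amul a b) (amul a b) = vdot a a * vdot b b,
      forall a : 'rV[R]_k, amul (aone R k) a = a,
      forall a : 'rV[R]_k, amul a (aconj a) = vdot a a *: aone R k &
      forall a : 'rV[R]_k, amul (aconj a) a = vdot a a *: aone R k].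

Definition mul_model k m (mu : 'rV[R]_m -> 'rV[R]_k -> 'rV[R]_k) (W : 'M[R]_k)
    (PX : 'M[R]_(m, k)) (PY PZ : 'M[R]_k) : Prop :=
  [/\ lin_isometry PX, lin_isometry PY, lin_isometry PZ,
      (forall x : 'rV[R]_m, (x *m PX <= W)%MS) &
      (forall x y, mu x y *m PZ = amul (x *m PX) (y *m PY))].

Definition unital_mul_model k m (mu : 'rV[R]_m -> 'rV[R]_k -> 'rV[R]_k) (W : 'M[R]_k)
    (eX : 'rV[R]_m) (eY : 'rV[R]_k) : Prop :=
  exists (PX : 'M[R]_(m, k)) (PY PZ : 'M[R]_k),
    mul_model mu W PX PY PZ /\ eX *m PX = aone R k /\ eY *m PY = aone R k.

Lemma unital_mul_model_of_frames k m (mu : 'rV[R]_m -> 'rV[R]_k -> 'rV[R]_k)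
    (W : 'M[R]_k) (eX : 'rV[R]_m) (eY : 'rV[R]_k) (F : 'M[R]_m) (Wb : 'M[R]_(m, k))
    (PY : 'M[R]_k) (i0 : 'I_m) :
  isometric_bilinear mu -> vdot eX eX = 1 ->
  F *m F^T = 1%:M -> row i0 F = eX ->
  Wb *m Wb^T = 1%:M -> row i0 Wb = aone R k -> (Wb <= W)%MS ->
  PY *m PY^T = 1%:M -> eY *m PY = aone R k ->
  (forall i, Jmu mu eX (row i F) *m PY = PY *m lmul (row i Wb)) ->
  unital_mul_model mu W eX eY.
Proof.
move=> mu_iso eX1 FF F0 WW W0 WbW PP eYP J_lmul.
have AA := mumx_unit_orth mu_iso eX1.
exists (F^T *m Wb), PY, ((mumx mu eX)^T *m PY); split; [split|split] => //.
- apply: orthonormal_lin_isometry.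
  by rewrite trmx_mul trmxK mulmxA -(mulmxA _ Wb) WW mulmx1 (mulmx1C FF).
- exact: orthonormal_lin_isometry.
- apply: orthonormal_lin_isometry.
  by rewrite trmx_mul trmxK mulmxA -(mulmxA _ PY) PP mulmx1 (mulmx1C AA).
- by move=> x; rewrite mulmxA (submx_trans (submxMl _ _) WbW).
- move=> x y; rewrite amul_lmul (mu_mumx mu_iso) -!mulmxA; congr (_ *m _).
  have xF : x = \sum_i (x *m F^T) 0 i *: row i F.
    by rewrite -mulmx_sum_row -mulmxA (mulmx1C FF) mulmx1.
  have xP : x *m (F^T *m Wb) = \sum_i (x *m F^T) 0 i *: row i Wb.
    by rewrite mulmxA mulmx_sum_row.
  rewrite xP lmul_sum {1}xF (mumx_sum mu_iso) mulmxA !mulmx_suml mulmx_sumr.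
  apply: eq_bigr => i _.
  by rewrite -!scalemxAl -scalemxAr J_lmul.
- by rewrite mulmxA -F0 -row_mul FF row1 -rowE.
Qed.

(* Left multiplication by a unit [w0] of [W] is an isometry of A, and by
   [aconj w0] it moves [W] to a subspace of the same dimension containing 1. *)
Lemma mul_model_of_unital k m (mu : 'rV[R]_m -> 'rV[R]_k -> 'rV[R]_k) (W : 'M[R]_k) :
  normed_assoc_algebra k -> (0 < \rank W)%N ->
  (forall W' : 'M[R]_k, (\rank W <= \rank W')%N -> (aone R k <= W')%MS ->
     exists PX PY PZ, mul_model mu W' PX PY PZ) ->
  exists PX PY PZ, mul_model mu W PX PY PZ.
Proof.
move=> [amulA amul_norm amul1 amul_conj conj_amul] W_gt0 unital.
have [w0 [w0W _ w01]] := @exists_unit_orth R k 0 k W 0 ltac:(by rewrite mxrank0).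
have lmul_inv : lmul (aconj w0) *m lmul w0 = 1%:M.
  by apply/eqP/mulmxP => v; rewrite mulmxA -!amul_lmul amulA amul_conj w01 scale1r amul1 mulmx1.
have [||PX [PY [PZ [PXi PYi PZi PXW mulP]]]] := unital (W *m lmul (aconj w0)).
- by rewrite -{1}[W]mulmx1 -lmul_inv mulmxA; apply: mxrankM_maxl.
- by rewrite -(scale1r (aone R k)) -w01 -conj_amul amul_lmul submxMr.
have lmul_iso p (P : 'M[R]_(p, k)) : lin_isometry P -> lin_isometry (P *m lmul w0).
  by move=> Pi x; rewrite !vnormE mulmxA -amul_lmul amul_norm w01 mul1r -vnormE Pi vnormE.
exists (PX *m lmul w0), PY, (PZ *m lmul w0); split; try exact: lmul_iso; first exact: PYi.
- by move=> x; rewrite mulmxA -[W]mulmx1 -lmul_inv mulmxA submxMr.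
- by move=> x y; rewrite mulmxA mulP -amul_lmul amulA (mulmxA x) -amul_lmul.
Qed.

End MulModels.

Lemma ordS_ind n (P : 'I_n.+1 -> Prop) :
  P ord0 -> (forall i : 'I_n, P (lift ord0 i)) -> forall i, P i.
Proof. by move=> P0 PS i; case: (unliftP ord0 i) => [j ->|->]. Qed.

(* Expands a polynomial identity in the coordinates of row vectors of a concrete
   dimension; the indices are enumerated as produced by [big_ord_recl], so that
   both sides share the same atoms [a 0 (lift ord0 ...)]. *)
Ltac by_coordinates :=
  rewrite /aconj ?vdotE; try (apply/rowP; repeat apply: ordS_ind; try by case);
  rewrite ?(mxE, big_ord_recl, big_ord0) /= /qcoef /=; ring.

Ltac rowwise :=
  apply/row_matrixP; repeat apply: ordS_ind; try (by case);
  rewrite !row_mul !row_mxrows /= ?mulNmx -?rowE ?row_mxrows /=.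

Section Coordinates.
Variable R : rcfType.

Lemma amul1r k (a : 'rV[R]_k.+1) : amul (aone R k.+1) a = a.
Proof. by rewrite amul_lmul lmul_one mulmx1. Qed.

Lemma amulNl k (a b : 'rV[R]_k) : amul (- a) b = - amul a b.
Proof. by rewrite !amul_lmul -[- a]scaleN1r lmulZ scaleN1r mulmxN. Qed.

Lemma amulNr k (a b : 'rV[R]_k) : amul a (- b) = - amul a b.
Proof. by rewrite !amul_lmul mulNmx. Qed.

Definition q4 (x0 x1 x2 x3 : R) : 'rV[R]_4 := \row_(i < 4) nth 0 [:: x0; x1; x2; x3] i.

Lemma q4P (a : 'rV[R]_4) : exists x0 x1 x2 x3, a = q4 x0 x1 x2 x3.
Proof.
exists (a 0 0), (a 0 (inord 1)), (a 0 (inord 2)), (a 0 (inord 3)).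
apply/rowP => -[[|[|[|[|i]]]] hi]; rewrite mxE //=; congr (a 0 _); apply/val_inj;
  by rewrite /= ?inordK.
Qed.

Lemma amul_q4 (a0 a1 a2 a3 b0 b1 b2 b3 : R) :
  amul (q4 a0 a1 a2 a3) (q4 b0 b1 b2 b3) =
  q4 (a0 * b0 - a1 * b1 - a2 * b2 - a3 * b3) (a0 * b1 + a1 * b0 + a2 * b3 - a3 * b2)
     (a0 * b2 - a1 * b3 + a2 * b0 + a3 * b1) (a0 * b3 + a1 * b2 - a2 * b1 + a3 * b0).
Proof. rewrite /q4; by_coordinates. Qed.

(* Expanding the nested sums of [amul] directly is far too slow for [ring]. *)
Lemma amul4A (a b c : 'rV[R]_4) : amul a (amul b c) = amul (amul a b) c.
Proof.
have [a0 [a1 [a2 [a3 ->]]]] := q4P a; have [b0 [b1 [b2 [b3 ->]]]] := q4P b.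
have [c0 [c1 [c2 [c3 ->]]]] := q4P c.
by rewrite !amul_q4; congr q4; ring.
Qed.

Lemma normed_assoc_algebra124 k : k \in [:: 1%N; 2%N; 4%N] -> normed_assoc_algebra R k.
Proof.
rewrite !inE => /or3P[] /eqP ->; (split; [| |exact: amul1r| |]);
  try exact: amul4A; by move=> *; by_coordinates.
Qed.

Lemma amul4r1 (a : 'rV[R]_4) : amul a (aone R 4) = a.
Proof. by_coordinates. Qed.

Lemma amul4_sqr (a : 'rV[R]_4) :
  amul a a = (2 * vdot a (aone R 4)) *: a - vdot a a *: aone R 4.
Proof. by_coordinates. Qed.

Lemma amul4_anticomm (a b : 'rV[R]_4) :
  amul a b + amul b a = (2 * vdot a (aone R 4)) *: b + (2 * vdot b (aone R 4)) *: a
                        - (2 * vdot a b) *: aone R 4.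
Proof. by_coordinates. Qed.

Lemma vdot_amul4_1 (a b : 'rV[R]_4) :
  vdot (amul a b) (aone R 4) = 2 * vdot a (aone R 4) * vdot b (aone R 4) - vdot a b.
Proof. by_coordinates. Qed.

Lemma vdot_amul4_l (a b : 'rV[R]_4) : vdot (amul a b) a = vdot a a * vdot b (aone R 4).
Proof. by_coordinates. Qed.

Lemma vdot_amul4_r (a b : 'rV[R]_4) : vdot (amul a b) b = vdot b b * vdot a (aone R 4).
Proof. by_coordinates. Qed.

Lemma pure_sqr (w : 'rV[R]_4) :
  vdot w (aone R 4) = 0 -> vdot w w = 1 -> amul w w = - aone R 4.
Proof. by move=> w0 w1; rewrite amul4_sqr w0 w1 mulr0 scale0r scale1r sub0r. Qed.

Lemma pure_anticomm (a b : 'rV[R]_4) :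
  vdot a (aone R 4) = 0 -> vdot b (aone R 4) = 0 -> vdot a b = 0 ->
  amul b a = - amul a b.
Proof.
move=> a0 b0 ab; apply/eqP; rewrite -addr_eq0 addrC amul4_anticomm a0 b0 ab.
by rewrite !mulr0 !scale0r !addr0 subr0.
Qed.

Lemma lmul4M (a b : 'rV[R]_4) : lmul b *m lmul a = lmul (amul a b).
Proof. by apply/eqP/mulmxP => v; rewrite mulmxA -!amul_lmul amul4A. Qed.

End Coordinates.

Section QuaternionFrames.
Variable R : rcfType.

Local Notation e4 i := (delta_mx 0 (@Ordinal 4 i isT) : 'rV[R]_4).

(* Matrices of left multiplication by i and j in the basis (1, i, j, ij) of H. *)
Definition S1 : 'M[R]_4 := mxrows 4 [:: e4 1; - e4 0; e4 3; - e4 2].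
Definition S2 : 'M[R]_4 := mxrows 4 [:: e4 2; - e4 3; - e4 0; e4 1].

Definition cplx_frame (J : 'M[R]_4) (y u : 'rV[R]_4) : 'M[R]_4 :=
  mxrows 4 [:: y; y *m J; u; u *m J].

Definition pure_frame (w c : 'rV[R]_4) : 'M[R]_4 :=
  mxrows 4 [:: aone R 4; w; c; amul w c].

Lemma vdot_amul4 (a b : 'rV[R]_4) : vdot (amul a b) (amul a b) = vdot a a * vdot b b.
Proof. by have [_ ->] := @normed_assoc_algebra124 R 4 isT. Qed.

Lemma orthonormal_cplx_frame (J : 'M[R]_4) (y u : 'rV[R]_4) :
  cplx_struct J -> vdot y y = 1 -> vdot u u = 1 -> vdot u y = 0 -> vdot u (y *m J) = 0 ->
  cplx_frame J y u *m (cplx_frame J y u)^T = 1%:M.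
Proof.
move=> cJ y1 u1 uy uyJ; apply: orthonormal_mxrows4; rewrite ?vdotJ // 1?vdotC //.
- exact: vdotJ_id.
- by rewrite vdotJl // uyJ oppr0.
- exact: vdotJ_id.
Qed.

Lemma orthonormal_signed_pure_frame (w c : 'rV[R]_4) (d : R) :
  vdot w (aone R 4) = 0 -> vdot c (aone R 4) = 0 ->
  vdot w w = 1 -> vdot c c = 1 -> vdot w c = 0 -> d * d = 1 ->
  let P := mxrows 4 [:: aone R 4; w; c; d *: amul w c] in P *m P^T = 1%:M.
Proof.
move=> w0 c0 w1 c1 wc d1.
apply: orthonormal_mxrows4; rewrite ?vdot_aone ?vdotZr ?vdotZl ?vdot_amul4 // 1?vdotC //.
- by rewrite w1 c1 !mulr1 d1.
- by rewrite vdot_amul4_1 w0 c0 wc !mulr0 subr0 mulr0.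
- by rewrite vdot_amul4_l c0 !mulr0.
- by rewrite vdot_amul4_r w0 !mulr0.
Qed.

Lemma orthonormal_pure_frame (w c : 'rV[R]_4) :
  vdot w (aone R 4) = 0 -> vdot c (aone R 4) = 0 ->
  vdot w w = 1 -> vdot c c = 1 -> vdot w c = 0 ->
  pure_frame w c *m (pure_frame w c)^T = 1%:M.
Proof.
move=> w0 c0 w1 c1 wc.
by have := orthonormal_signed_pure_frame w0 c0 w1 c1 wc (mulr1 1); rewrite scale1r.
Qed.

Lemma cplx_frame_mulTmx_pure (J : 'M[R]_4) (y u w c : 'rV[R]_4) :
  cplx_frame J y u *m (cplx_frame J y u)^T = 1%:M ->
  y *m ((cplx_frame J y u)^T *m pure_frame w c) = aone R 4.
Proof. by move=> BB; have := row_mulTmx (pure_frame w c) 0 BB; rewrite !row_mxrows. Qed.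

Section Frames.
Variables (J1 J2 : 'M[R]_4) (y w1 w2 : 'rV[R]_4).
Hypotheses (cJ1 : cplx_struct J1) (y1 : vdot y y = 1).
Hypotheses (w10 : vdot w1 (aone R 4) = 0) (w20 : vdot w2 (aone R 4) = 0).
Hypotheses (w11 : vdot w1 w1 = 1) (w21 : vdot w2 w2 = 1) (w12 : vdot w1 w2 = 0).

Lemma cplx_frame_intertwine u : vdot u u = 1 -> vdot u y = 0 -> vdot u (y *m J1) = 0 ->
  let P := (cplx_frame J1 y u)^T *m pure_frame w1 w2 in J1 *m P = P *m lmul w1.
Proof.
move=> u1 uy uyJ; apply: (intertwine_conj (S := S1)).
- exact: orthonormal_cplx_frame.
- exact: orthonormal_pure_frame.
- by case: cJ1 => _ JJ; rowwise; rewrite // -mulmxA JJ mulmxN mulmx1.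
- by rowwise; rewrite -!amul_lmul ?amul4r1 ?pure_sqr // amul4A pure_sqr // amulNl amul1r.
Qed.

Hypotheses (cJ2 : cplx_struct J2) (J12 : J1 *m J2 = - (J2 *m J1)).

Lemma cplx_frame2_intertwine :
  let P := (cplx_frame J1 y (y *m J2))^T *m pure_frame w1 w2 in
  J1 *m P = P *m lmul w1 /\ J2 *m P = P *m lmul w2.
Proof.
have J21 : J2 *m J1 = - (J1 *m J2) by rewrite J12 opprK.
have yJ21 : vdot (y *m J2) (y *m J2) = 1 by rewrite vdotJ.
have yJ2y : vdot (y *m J2) y = 0 by rewrite vdotJ_id.
have yJ2J1 : vdot (y *m J2) (y *m J1) = 0 by rewrite vdotJJ // J21.
split; first exact: cplx_frame_intertwine.
apply: (intertwine_conj (S := S2)).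
- exact: orthonormal_cplx_frame.
- exact: orthonormal_pure_frame.
- case: cJ2 => _ J22; rowwise; rewrite // ?mulmxA.
  + by rewrite -(mulmxA y J1 J2) J12 mulmxN mulmxA.
  + by rewrite -mulmxA J22 mulmxN mulmx1.
  + by rewrite -!mulmxA J12 mulmxN (mulmxA J2 J2 J1) J22 mulNmx mul1mx opprK.
- rowwise; rewrite -!amul_lmul ?amul4r1 //.
  + by rewrite pure_anticomm.
  + by rewrite pure_sqr.
  + by rewrite amul4A (pure_anticomm w10 w20 w12) amulNl -amul4A pure_sqr // amulNr opprK amul4r1.
Qed.

End Frames.

(* In dimension 4, a complex structure anticommuting with [J1] and [J2] is [J2 J1]
   up to sign: [J3 - d J2 J1] anticommutes with [J1], [J2] and kills a unit [y],
   hence kills the whole frame [y, y J1, y J2, y J2 J1]. *)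
Lemma third_cplx_struct (J1 J2 J3 : 'M[R]_4) :
  cplx_struct J1 -> cplx_struct J2 -> cplx_struct J3 ->
  J1 *m J2 = - (J2 *m J1) -> J1 *m J3 = - (J3 *m J1) -> J2 *m J3 = - (J3 *m J2) ->
  exists d : R, d * d = 1 /\ J3 = d *: (J2 *m J1).
Proof.
move=> cJ1 cJ2 cJ3 J12 J13 J23; set y := aone R 4; have y1 : vdot y y = 1 := vdot_aone R 3.
have J21 : J2 *m J1 = - (J1 *m J2) by rewrite J12 opprK.
have BB : cplx_frame J1 y (y *m J2) *m (cplx_frame J1 y (y *m J2))^T = 1%:M.
  by apply: orthonormal_cplx_frame; rewrite ?vdotJ ?vdotJ_id ?vdotJJ ?J21.
set d := vdot (y *m J3) (y *m J2 *m J1).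
have yJ3 : y *m J3 = d *: (y *m J2 *m J1).
  rewrite {1}(orthonormal_expand (y *m J3) BB) !big_ord_recl big_ord0 !row_mxrows /=.
  rewrite vdotJ_id // !vdotJJ //; first by rewrite !scale0r !add0r addr0.
  - by rewrite J23 opprK.
  - by rewrite J13 opprK.
exists d; split.
  by have := vdotJ y y cJ3; rewrite yJ3 vdotZl vdotZr !vdotJ // y1 mulr1.
set M := J3 - d *: (J2 *m J1).
have J1M : J1 *m M = - (M *m J1).
  rewrite /M mulmxBr mulmxBl -scalemxAr -scalemxAl J13 (mulmxA J1 J2 J1) J12 mulNmx.
  by rewrite scalerN opprK opprB addrC.
have J2M : J2 *m M = - (M *m J2).
  case: cJ2 => _ J22.
  rewrite /M mulmxBr mulmxBl -scalemxAr -scalemxAl J23 (mulmxA J2 J2 J1) J22 mulNmx mul1mx.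
  rewrite -(mulmxA J2 J1 J2) J12 mulmxN (mulmxA J2 J2 J1) J22 mulNmx mul1mx opprK.
  by rewrite scalerN opprK opprB addrC.
have yM : y *m M = 0 by rewrite /M mulmxBr -scalemxAr mulmxA -yJ3 subrr.
have BM : cplx_frame J1 y (y *m J2) *m M = 0.
  apply/row_matrixP; repeat apply: ordS_ind; try (by case);
    rewrite row_mul row0 row_mxrows /=.
  - by rewrite yM.
  - by rewrite -mulmxA J1M mulmxN mulmxA yM mul0mx oppr0.
  - by rewrite -mulmxA J2M mulmxN mulmxA yM mul0mx oppr0.
  - by rewrite -!mulmxA J1M mulmxN (mulmxA J2 M J1) J2M mulNmx !mulmxN !mulmxA yM !mul0mx !oppr0.
have M0 : M = 0 by rewrite -[M]mul1mx -(mulmx1C BB) -mulmxA BM mulmx0.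
by apply/eqP; rewrite -subr_eq0 -/M M0.
Qed.

End QuaternionFrames.

Section UnitalModels.
Variable R : rcfType.

Lemma Jmu_lmul_unit k m (mu : 'rV[R]_m -> 'rV[R]_k.+1 -> 'rV[R]_k.+1) eX (PY : 'M[R]_k.+1) :
  isometric_bilinear mu -> vdot eX eX = 1 ->
  Jmu mu eX eX *m PY = PY *m lmul (aone R k.+1).
Proof. by move=> mu_iso eX1; rewrite Jmu_unit // lmul_one mul1mx mulmx1. Qed.

Lemma full_submx n (W : 'M[R]_n) p (V : 'M[R]_(p, n)) : (n <= \rank W)%N -> (V <= W)%MS.
Proof. by move=> Wn; apply: submx_full; rewrite /row_full eqn_leq rank_leq_col Wn. Qed.

Lemma unital_mul_model_dim1 n (mu : 'rV[R]_1 -> 'rV[R]_n.+1 -> 'rV[R]_n.+1) W eX eY :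
  isometric_bilinear mu -> (aone R n.+1 <= W)%MS -> vdot eX eX = 1 -> vdot eY eY = 1 ->
  unital_mul_model mu W eX eY.
Proof.
move=> mu_iso W1 eX1 eY1.
have [F [FF F0]] := orthonormal_basis_row0 eX1.
have [B [BB B0]] := orthonormal_basis_row0 eY1.
have row0_id p (v : 'rV[R]_p) : row 0 v = v by apply/rowP => j; rewrite mxE.
apply: (unital_mul_model_of_frames (Wb := aone R n.+1) (PY := B^T) mu_iso eX1 FF F0) => //.
- by apply: orthonormal_row; rewrite vdot_aone.
- by rewrite trmxK mulmx1C.
- by rewrite -B0 -row_mul BB row1 aone_delta.
- by move=> i; rewrite !ord1 F0 row0_id Jmu_lmul_unit.
Qed.

Lemma lmul_i2 : lmul (delta_mx 0 (lift ord0 ord0) : 'rV[R]_2) =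
  mxrows 2 [:: delta_mx 0 (lift ord0 ord0); - delta_mx 0 ord0].
Proof.
apply/matrixP; repeat apply: ordS_ind; try (by case);
  rewrite ?(mxE, big_ord_recl, big_ord0) /= /qcoef /=; ring.
Qed.

Lemma unital_mul_model_22 (mu : 'rV[R]_2 -> 'rV[R]_2 -> 'rV[R]_2) W eX eY :
  isometric_bilinear mu -> (2 <= \rank W)%N -> vdot eX eX = 1 -> vdot eY eY = 1 ->
  unital_mul_model mu W eX eY.
Proof.
move=> mu_iso W2 eX1 eY1.
have [F [FF F0]] := orthonormal_basis_row0 eX1.
have cJ : cplx_struct (Jmu mu eX (row (lift ord0 ord0) F)).
  exact: (cplx_struct_Jmu_row mu_iso eX1 FF F0).
set J := Jmu mu eX _ in cJ; set B := mxrows 2 [:: eY; eY *m J].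
have BB : B *m B^T = 1%:M by apply: orthonormal_mxrows2; rewrite ?vdotJ // vdotC vdotJ_id.
apply: (unital_mul_model_of_frames (Wb := 1%:M) (PY := B^T) mu_iso eX1 FF F0).
- by rewrite trmx1 mulmx1.
- by rewrite row1 aone_delta.
- exact: full_submx.
- by rewrite trmxK mulmx1C.
- have -> : eY = row 0 B by rewrite row_mxrows.
  by rewrite -row_mul BB row1 aone_delta.
- apply: ordS_ind => [|i]; first by rewrite F0 row1 -aone_delta Jmu_lmul_unit.
  rewrite ord1 row1 lmul_i2; set S := mxrows 2 _.
  have := @intertwine_conj _ _ J S S B 1%:M BB; rewrite !mulmx1 trmx1.
  apply; rewrite ?mulmx1 ?mul1mx //.
  by case: cJ => _ JJ; rowwise; rewrite // -mulmxA JJ mulmxN mulmx1.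
Qed.

Lemma unital_mul_model_42 (mu : 'rV[R]_2 -> 'rV[R]_4 -> 'rV[R]_4) W eX eY :
  isometric_bilinear mu -> (2 <= \rank W)%N -> (aone R 4 <= W)%MS ->
  vdot eX eX = 1 -> vdot eY eY = 1 -> unital_mul_model mu W eX eY.
Proof.
move=> mu_iso W2 W1 eX1 eY1.
have [F [FF F0]] := orthonormal_basis_row0 eX1.
have cJ : cplx_struct (Jmu mu eX (row (lift ord0 ord0) F)).
  exact: (cplx_struct_Jmu_row mu_iso eX1 FF F0).
set J := Jmu mu eX _ in cJ.
have [w [wW w0 w1]] := exists_unit_orth1 (vdot_aone R 3) W2.
have [c [_ c0 cw c1]] := exists_unit_orth2 (S := 1%:M : 'M[R]_4) (vdot_aone R 3) w1
  ltac:(by rewrite vdotC) ltac:(by rewrite mxrank1).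
have [u [_ uy uyJ u1]] := exists_unit_orth2 (S := 1%:M : 'M[R]_4) eY1 (etrans (vdotJ _ _ cJ) eY1)
  ltac:(by rewrite vdotC vdotJ_id) ltac:(by rewrite mxrank1).
have wc : vdot w c = 0 by rewrite vdotC.
apply: (unital_mul_model_of_frames (Wb := mxrows 2 [:: aone R 4; w])
  (PY := (cplx_frame J eY u)^T *m pure_frame w c) mu_iso eX1 FF F0).
- by apply: orthonormal_mxrows2; rewrite ?vdot_aone // vdotC.
- by rewrite row_mxrows.
- by apply/row_subP; repeat apply: ordS_ind; try (by case); rewrite row_mxrows.
- apply: orthonormal_mulTmx; first exact: orthonormal_cplx_frame.
  exact: orthonormal_pure_frame.
- by apply: cplx_frame_mulTmx_pure; apply: orthonormal_cplx_frame.
- repeat apply: ordS_ind; try (by case); rewrite row_mxrows /=.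
  + by rewrite F0 Jmu_lmul_unit.
  + exact: cplx_frame_intertwine.
Qed.

Lemma unital_mul_model_43 (mu : 'rV[R]_3 -> 'rV[R]_4 -> 'rV[R]_4) W eX eY :
  isometric_bilinear mu -> (3 <= \rank W)%N -> (aone R 4 <= W)%MS ->
  vdot eX eX = 1 -> vdot eY eY = 1 -> unital_mul_model mu W eX eY.
Proof.
move=> mu_iso W3 W1 eX1 eY1.
have [F [FF F0]] := orthonormal_basis_row0 eX1.
set J1 := Jmu mu eX (row (lift ord0 ord0) F).
set J2 := Jmu mu eX (row (lift ord0 (lift ord0 ord0)) F).
have cJ1 : cplx_struct J1 by apply: (cplx_struct_Jmu_row mu_iso eX1 FF F0).
have cJ2 : cplx_struct J2 by apply: (cplx_struct_Jmu_row mu_iso eX1 FF F0).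
have J12 : J1 *m J2 = - (J2 *m J1) by apply: (Jmu_row_anticomm mu_iso eX1 FF F0).
have [w1 [w1W w10 w11]] := exists_unit_orth1 (vdot_aone R 3) (ltnW W3).
have [w2 [w2W w20 w21w w21]] := exists_unit_orth2 (vdot_aone R 3) w11
  ltac:(by rewrite vdotC) W3.
have w12 : vdot w1 w2 = 0 by rewrite vdotC.
have BB : cplx_frame J1 eY (eY *m J2) *m (cplx_frame J1 eY (eY *m J2))^T = 1%:M.
  by apply: orthonormal_cplx_frame; rewrite ?vdotJ ?vdotJ_id ?vdotJJ // J12 opprK.
have [J1P J2P] := cplx_frame2_intertwine cJ1 eY1 w10 w20 w11 w21 w12 cJ2 J12.
apply: (unital_mul_model_of_frames (Wb := mxrows 3 [:: aone R 4; w1; w2])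
  (PY := (cplx_frame J1 eY (eY *m J2))^T *m pure_frame w1 w2) mu_iso eX1 FF F0).
- by apply: orthonormal_mxrows3; rewrite ?vdot_aone // vdotC.
- by rewrite row_mxrows.
- by apply/row_subP; repeat apply: ordS_ind; try (by case); rewrite row_mxrows.
- by apply: orthonormal_mulTmx => //; apply: orthonormal_pure_frame.
- exact: cplx_frame_mulTmx_pure BB.
- repeat apply: ordS_ind; try (by case); rewrite row_mxrows /=.
  + by rewrite F0 Jmu_lmul_unit.
  + exact: J1P.
  + exact: J2P.
Qed.

Lemma unital_mul_model_44 (mu : 'rV[R]_4 -> 'rV[R]_4 -> 'rV[R]_4) W eX eY :
  isometric_bilinear mu -> (4 <= \rank W)%N ->
  vdot eX eX = 1 -> vdot eY eY = 1 -> unital_mul_model mu W eX eY.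
Proof.
move=> mu_iso W4 eX1 eY1.
have [F [FF F0]] := orthonormal_basis_row0 eX1.
set J1 := Jmu mu eX (row (lift ord0 ord0) F).
set J2 := Jmu mu eX (row (lift ord0 (lift ord0 ord0)) F).
set J3 := Jmu mu eX (row (lift ord0 (lift ord0 (lift ord0 ord0))) F).
have cJ1 : cplx_struct J1 by apply: (cplx_struct_Jmu_row mu_iso eX1 FF F0).
have cJ2 : cplx_struct J2 by apply: (cplx_struct_Jmu_row mu_iso eX1 FF F0).
have cJ3 : cplx_struct J3 by apply: (cplx_struct_Jmu_row mu_iso eX1 FF F0).
have J12 : J1 *m J2 = - (J2 *m J1) by apply: (Jmu_row_anticomm mu_iso eX1 FF F0).
have J13 : J1 *m J3 = - (J3 *m J1) by apply: (Jmu_row_anticomm mu_iso eX1 FF F0).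
have J23 : J2 *m J3 = - (J3 *m J2) by apply: (Jmu_row_anticomm mu_iso eX1 FF F0).
have [d [d1 J3E]] := third_cplx_struct cJ1 cJ2 cJ3 J12 J13 J23.
have [w1 [_ w10 w11]] := exists_unit_orth1 (S := 1%:M : 'M[R]_4) (vdot_aone R 3)
  ltac:(by rewrite mxrank1).
have [w2 [_ w20 w21w w21]] := exists_unit_orth2 (S := 1%:M : 'M[R]_4) (vdot_aone R 3) w11
  ltac:(by rewrite vdotC) ltac:(by rewrite mxrank1).
have w12 : vdot w1 w2 = 0 by rewrite vdotC.
have BB : cplx_frame J1 eY (eY *m J2) *m (cplx_frame J1 eY (eY *m J2))^T = 1%:M.
  by apply: orthonormal_cplx_frame; rewrite ?vdotJ ?vdotJ_id ?vdotJJ // J12 opprK.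
have [J1P J2P] := cplx_frame2_intertwine cJ1 eY1 w10 w20 w11 w21 w12 cJ2 J12.
apply: (unital_mul_model_of_frames (Wb := mxrows 4 [:: aone R 4; w1; w2; d *: amul w1 w2])
  (PY := (cplx_frame J1 eY (eY *m J2))^T *m pure_frame w1 w2) mu_iso eX1 FF F0).
- exact: orthonormal_signed_pure_frame.
- by rewrite row_mxrows.
- exact: full_submx.
- by apply: orthonormal_mulTmx => //; apply: orthonormal_pure_frame.
- exact: cplx_frame_mulTmx_pure BB.
- repeat apply: ordS_ind; try (by case); rewrite row_mxrows /=.
  + by rewrite F0 Jmu_lmul_unit.
  + exact: J1P.
  + exact: J2P.
  + rewrite -/J3 J3E lmulZ -scalemxAr -scalemxAl -mulmxA J1P mulmxA J2P -mulmxA lmul4M.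
    by rewrite scalemxAr.
Qed.

End UnitalModels.

Section Classification.
Variable R : rcfType.

Lemma unital_mul_model_exists k m (mu : 'rV[R]_m -> 'rV[R]_k -> 'rV[R]_k) W eX eY :
  k \in [:: 1%N; 2%N; 4%N] -> (0 < m)%N -> (m <= k)%N -> isometric_bilinear mu ->
  (m <= \rank W)%N -> (aone R k <= W)%MS -> vdot eX eX = 1 -> vdot eY eY = 1 ->
  unital_mul_model mu W eX eY.
Proof.
rewrite !inE => /or3P[] /eqP k_eq m_gt0 m_le mu_iso W_ge W1 eX1 eY1; subst k.
- have m1 : m = 1%N by lia.
  by subst m; apply: unital_mul_model_dim1.
- have [m1|m2] : m = 1%N \/ m = 2%N by lia.
  + by subst m; apply: unital_mul_model_dim1.
  + by subst m; apply: unital_mul_model_22.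
- have [m1|[m2|[m3|m4]]] : m = 1%N \/ m = 2%N \/ m = 3%N \/ m = 4%N by lia.
  + by subst m; apply: unital_mul_model_dim1.
  + by subst m; apply: unital_mul_model_42.
  + by subst m; apply: unital_mul_model_43.
  + by subst m; apply: unital_mul_model_44.
Qed.

Lemma exists_unit_row n : (0 < n)%N -> exists e : 'rV[R]_n, vdot e e = 1.
Proof. by case: n => // n _; exists (aone R n.+1); apply: vdot_aone. Qed.

Lemma mul_model_exists k m (mu : 'rV[R]_m -> 'rV[R]_k -> 'rV[R]_k) W :
  k \in [:: 1%N; 2%N; 4%N] -> (0 < m)%N -> (m <= k)%N -> isometric_bilinear mu ->
  \rank W = m -> exists PX PY PZ, mul_model mu W PX PY PZ.
Proof.
move=> k124 m_gt0 m_le mu_iso rW.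
have [eX eX1] := exists_unit_row m_gt0.
have [eY eY1] := exists_unit_row (leq_trans m_gt0 m_le).
apply: mul_model_of_unital (normed_assoc_algebra124 R k124) _ _; first by rewrite rW.
move=> W' W'_ge W'1.
have [PX [PY [PZ [model _]]]] : unital_mul_model mu W' eX eY.
  by apply: unital_mul_model_exists => //; rewrite -rW.
by exists PX, PY, PZ.
Qed.

End Classification.

Theorem mainTheorem11 (R : rcfType) (k m : nat)
  (mu : 'rV[R]_m -> 'rV[R]_k -> 'rV[R]_k) (W : 'M[R]_k) :
  k \in [:: 1%N; 2%N; 4%N] ->
  (0 < m)%N -> (m <= k)%N ->
  isometric_bilinear mu ->
  \rank W = m ->
  (exists (PX : 'M[R]_(m, k)) (PY PZ : 'M[R]_k),
      [/\ lin_isometry PX, lin_isometry PY, lin_isometry PZ,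
          (forall x : 'rV[R]_m, (x *m PX <= W)%MS) &
          (forall x y, mu x y *m PZ = amul (x *m PX) (y *m PY))])
  /\
  ((aone R k <= W)%MS ->
   forall (eX : 'rV[R]_m) (eY : 'rV[R]_k), vnorm eX = 1 -> vnorm eY = 1 ->
   exists (PX : 'M[R]_(m, k)) (PY PZ : 'M[R]_k),
      [/\ lin_isometry PX, lin_isometry PY, lin_isometry PZ,
          (forall x : 'rV[R]_m, (x *m PX <= W)%MS) &
          (forall x y, mu x y *m PZ = amul (x *m PX) (y *m PY))]
      /\ eX *m PX = aone R k /\ eY *m PY = aone R k).
Proof.
move=> k124 m_gt0 m_le mu_iso rW; split; first exact: mul_model_exists.
move=> W1 eX eY /vdot_of_vnorm eX1 /vdot_of_vnorm eY1.
by apply: unital_mul_model_exists; rewrite ?rW.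
Qed.
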